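(* Consider the stochastic platoon coordination setting described in the context, where the travel times and start times form a random element $\boldsymbol\tau$ taking values in a countable set of realizations $\tau$ with probabilities $\Pr(\boldsymbol\tau=\tau)$, and vehicle $i$'s utility is $U^i(\boldsymbol w^i,\boldsymbol w^{-i})=\sum_{\tau}\Pr(\boldsymbol\tau=\tau)\,U^i(\boldsymbol w^i,\boldsymbol w^{-i},\tau)$. Then the game $G^s=(\mathcal N,\mathcal W,\{U^i\}_{i\in\mathcal N})$, $\mathcal W=\mathcal W^1\times\dots\times\mathcal W^N$, is an exact potential game with potential function $$\Phi(\boldsymbol w)=\sum_{\tau}\Pr(\boldsymbol\tau=\tau)\,\Phi(\boldsymbol w,\tau),\qquad \Phi(\boldsymbol w,\tau)=\sum_{t\in\mathbb Z_+}\sum_{e\in\mathcal E} r\big(|C(e,t,\boldsymbol w,\tau)|,e\big)-\sum_{i\in\mathcal N}\Lambda_i(\boldsymbol w^i),$$ where $r(n,e)=\sum_{j=1}^nR(j,e)$; that is, $\Phi(\boldsymbol w^{i\prime},\boldsymbol w^{-i})-\Phi(\boldsymbol w^{i\prime\prime},\boldsymbol w^{-i})=U^i(\boldsymbol w^{i\prime},\boldsymbol w^{-i})-U^i(\boldsymbol w^{i\prime\prime},\boldsymbol w^{-i})$ for all $i$, all $\boldsymbol w^{i\prime},\boldsymbol w^{i\prime\prime}\in\mathcal W^i$ and all $\boldsymbol w^{-i}$. Hence $G^s$ admits at least one pure Nash equilibrium.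
   Context: Deterministic ingredients: a directed graph $\mathcal G=(\mathcal V,\mathcal E)$; vehicles $\mathcal N=\{1,\dots,N\}$; vehicle $i$ has a fixed path of edges $e^i_1,\dots,e^i_{|\mathcal P^i|}$ with $e^i_k$ from node $v^i_k$ to $v^i_{k+1}$; a finite action set $\mathcal W^i$ of waiting-time vectors $\boldsymbol w^i=(w^i_1,\dots,w^i_{|\mathcal P^i|})\in\mathbb Z_+^{|\mathcal P^i|}$ ($w^i_k$ = waiting time at $v^i_k$); a reward function $R:\mathbb Z_{\ge1}\times\mathcal E\to\mathbb R$; waiting costs $\Lambda_i:\mathcal W^i\to\mathbb R$. A realization $\tau$ consists of travel times $\tau(e,t)\in\mathbb Z_+$ for every $e\in\mathcal E$, $t\in\mathbb Z_+$ (travel time on $e$ when entered at time $t$) and start times $\tau_0^i\in\mathbb Z_+$ (arrival time at $v^i_1$). Given $\tau$ and $\boldsymbol w$, departure times are $t^i_1=\tau^i_0+w^i_1$, $t^i_{k+1}=w^i_{k+1}+t^i_k+\tau(e^i_k,t^i_k)$; $C(e,t,\boldsymbol w,\tau)=\{i:\exists k,\ e^i_k=e,\ t^i_k=t\}$; and $$U^i(\boldsymbol w^i,\boldsymbol w^{-i},\tau)=\sum_{k=1}^{|\mathcal P^i|}R\big(|C(e^i_k,t^i_k,\boldsymbol w,\tau)|,e^i_k\big)-\Lambda_i(\boldsymbol w^i).$$ A game is an exact potential game if a function $\Phi$ on action profiles exists such that any unilateral change of one player's action changes $\Phi$ by exactly the change in that player's utility. A pure Nash equilibrium is a profile from which no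 player can increase its own utility by a unilateral change of action. *)

From HB Require Import structures.
From mathcomp Require Import all_boot all_order all_algebra.
From mathcomp Require Import all_classical all_reals all_analysis.
Set Implicit Arguments. Unset Strict Implicit. Unset Printing Implicit Defensive.
Import Order.TTheory GRing.Theory Num.Theory numFieldNormedType.Exports.
Local Open Scope ring_scope.

(* A path is a sequence of edges e_1 .. e_m with dst e_k = src e_{k+1};
   as a path in a graph, its vertices v_1 = src e_1, v_2 = dst e_1, ...,
   v_{m+1} = dst e_m are pairwise distinct. *)
Definition is_path (V E : finType) (src dst : E -> V) (es : seq E) : bool :=
  match es with
  | [::] => true
  | e :: es' => path (fun a b => dst a == src b) e es'
                && uniq (src e :: map dst es)
  end.

(* A realization tau: travel times tau(e,t) for every edge and entry time,
   and start times tau_0^i (arrival time of vehicle i at its first node). *)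
Record realization (N : nat) (E : finType) := Realization {
  ttime : E -> nat -> nat;
  tstart : 'I_N -> nat }.

Fixpoint dep_times (E : finType) (tt : E -> nat -> nat) (t : nat)
    (es : seq E) (ws : seq nat) : seq nat :=
  match es, ws with
  | e :: es', wk :: ws' => let tk := (t + wk)%N in
      tk :: dep_times tt (tk + tt e tk)%N es' ws'
  | _, _ => [::]
  end.

Section Game.
Variables (R : realType) (N : nat) (E : finType).
Variable P : 'I_N -> seq E.

Definition deps (w : 'I_N -> seq nat) (tau : realization N E) (i : 'I_N) :=
  dep_times (ttime tau) (tstart tau i) (P i) (w i).

Definition Cset (e : E) (t : nat) (w : 'I_N -> seq nat)
    (tau : realization N E) : {set 'I_N} :=
  [set i | (e, t) \in zip (P i) (deps w tau i)].

Variables (Rw : nat -> E -> R) (Lam : 'I_N -> seq nat -> R).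

Definition Ureal (i : 'I_N) (w : 'I_N -> seq nat) (tau : realization N E) : R :=
  \sum_(et <- zip (P i) (deps w tau i)) Rw #|Cset et.1 et.2 w tau| et.1
  - Lam i (w i).

Definition rcum (n : nat) (e : E) : R := \sum_(1 <= j < n.+1) Rw j e.

Definition Phireal (w : 'I_N -> seq nat) (tau : realization N E) : R :=
  limn (@series R (fun t : nat => \sum_(e : E) rcum #|Cset e t w tau| e))
  - \sum_(i : 'I_N) Lam i (w i).

(* Expectations over the countable family of realizations taus k with
   probabilities p k (series over k). *)
Variables (p : nat -> R) (taus : nat -> realization N E).

Definition Uexp (i : 'I_N) (w : 'I_N -> seq nat) : R :=
  limn (@series R (fun k => p k * Ureal i w (taus k))).

Definition Phiexp (w : 'I_N -> seq nat) : R :=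
  limn (@series R (fun k => p k * Phireal w (taus k))).

End Game.

Definition upd (N : nat) (w : 'I_N -> seq nat) (i : 'I_N) (a : seq nat) :=
  fun j => if j == i then a else w j.

From HB Require Import structures.
From mathcomp Require Import all_boot all_order all_algebra.
From mathcomp Require Import all_classical all_reals all_analysis.
From mathcomp Require Import lra zify.
Import Order.TTheory GRing.Theory Num.Theory numFieldNormedType.Exports.
Local Open Scope ring_scope.

(* Splitting i off every platoon gives
   r(|C|, e) = r(|C \ i|, e) + [i \in C] R(|C|, e); summed over all (e, t),
   the first part only depends on the other vehicles' actions and the second
   is exactly the platoon reward of i.  Hence Phi(w, tau) - U^i(w, tau) does
   not depend on w^i.  The sum over t is finite (platoons are empty after the
   last departure) and both Phi(w, tau) and U^i(w, tau) are bounded uniformly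
   in tau, so the identity survives taking expectations.  Finally, a maximiser
   of the potential over the finite action space is a pure Nash equilibrium. *)

Lemma mem_zip_snd (S T : eqType) (s : seq S) (t : seq T) (x : S * T) :
  x \in zip s t -> x.2 \in t.
Proof.
elim: s t => [|a s IH] [|b t] //=.
rewrite in_cons => /orP [/eqP -> | /IH]; first by rewrite /= eqxx.
by move=> ->; rewrite orbT.
Qed.

Lemma sum_grid_mem_uniq {V : nmodType} {E : finType} (T : nat)
    (L : seq (E * nat)) (g : E -> nat -> V) :
  uniq L -> (forall x, x \in L -> (x.2 < T)%N) ->
  \sum_(0 <= t < T) \sum_(e : E) (if (e, t) \in L then g e t else 0)
  = \sum_(x <- L) g x.1 x.2.
Proof.
move=> uL LT.
have cell x : x \in L ->
    \sum_(0 <= t < T) \sum_(e : E) (if x == (e, t) then g e t else 0)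
    = g x.1 x.2.
  case: x => e0 t0 /LT /= t0T.
  rewrite (bigD1_seq t0) ?mem_index_iota ?iota_uniq //= [X in _ + X]big1 ?addr0.
    rewrite (bigD1 e0) //= eqxx big1 ?addr0 // => e ee0.
    by rewrite xpair_eqE eq_sym (negbTE ee0).
  move=> t tt0; apply: big1 => e _.
  by rewrite xpair_eqE [t0 == t]eq_sym (negbTE tt0) andbF.
rewrite -(eq_big_seq _ cell) [RHS]exchange_big; apply: eq_bigr => t _.
rewrite [RHS]exchange_big; apply: eq_bigr => e _.
rewrite -big_mkcond big_const_seq iter_addr_0.
by have := count_uniq_mem (e, t) uL; rewrite /= => ->; case: ((e, t) \in L).
Qed.

Lemma sumr_const_seq {V : nmodType} {I : Type} (s : seq I) (c : V) :
  \sum_(x <- s) c = c *+ size s.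
Proof. by rewrite big_const_seq count_predT iter_addr_0. Qed.

Lemma lim_series_eventually0 {R : numFieldType} (f : nat -> R) (T : nat) :
  (forall t, (T <= t)%N -> f t = 0) -> limn (series f) = \sum_(0 <= t < T) f t.
Proof.
move=> f0; apply: cvg_lim => //; apply: cvg_near_cst; exists T => // n /= Tn.
rewrite /series /= (big_cat_nat _ Tn) //= [X in _ + X]big1_seq ?addr0 // => t.
by rewrite /= mem_index_iota => /andP[Tt _]; apply: f0.
Qed.

Lemma is_cvg_series_weighted {R : realType} {p f : nat -> R} {M : R} :
  (forall k, 0 <= p k) -> cvgn (series p) -> (forall k, `|f k| <= M) ->
  cvgn (series (fun k => p k * f k)).
Proof.
move=> p0 cvg_p fM; apply: normed_cvg.
apply: (@series_le_cvg _ _ (M *: p)) => [k|k|k|]; rewrite /= ?normr_ge0 //.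
- by rewrite mulr_ge0 // (le_trans _ (fM k)).
- by rewrite normrM ger0_norm // mulrC ler_wpM2r.
- exact: is_cvg_seriesZ.
Qed.

Lemma upd_id {N : nat} (w : 'I_N -> seq nat) (i : 'I_N) : upd w i (w i) = w.
Proof. by apply: funext => j; rewrite /upd; case: eqP => [-> |]. Qed.

Section PotentialGame.
Context {R : realType} {N : nat} {W : 'I_N -> seq (seq nat)}.
Hypothesis W_neq0 : forall j, W j != [::].

Lemma exists_max_profile (F : ('I_N -> seq nat) -> R) :
  exists2 w, (forall j, w j \in W j) &
    forall v, (forall j, v j \in W j) -> F v <= F w.
Proof.
pose prof (f : {dffun forall j : 'I_N, 'I_(size (W j))}) j :=
  tnth (in_tuple (W j)) (f j).
have W_gt0 j : (0 < size (W j))%N by rewrite lt0n size_eq0.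
pose f0 : {dffun forall j : 'I_N, 'I_(size (W j))} :=
  [ffun j => Ordinal (W_gt0 j)].
have [f _ fmax] := @arg_maxP _ R _ f0 predT (F \o prof) isT.
exists (prof f) => [j | v vW]; first exact: mem_tnth.
pose g : {dffun forall j : 'I_N, 'I_(size (W j))} :=
  [ffun j => sval (seq_tnthP (vW j))].
have -> : v = prof g.
  by apply: funext => j; rewrite /prof ffunE; exact: svalP (seq_tnthP (vW j)).
exact: fmax.
Qed.

Lemma potential_max_is_Nash (Phi : ('I_N -> seq nat) -> R)
    (U : 'I_N -> ('I_N -> seq nat) -> R) (w : 'I_N -> seq nat) :
  (forall i v a b, (forall j, j != i -> v j \in W j) ->
     a \in W i -> b \in W i ->
     Phi (upd v i a) - Phi (upd v i b) = U i (upd v i a) - U i (upd v i b)) ->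
  (forall j, w j \in W j) ->
  (forall v, (forall j, v j \in W j) -> Phi v <= Phi w) ->
  forall i a, a \in W i -> U i (upd w i a) <= U i w.
Proof.
move=> potential wW wmax i a aW.
have := potential i w a (w i) (fun j _ => wW j) aW (wW i); rewrite upd_id.
have : Phi (upd w i a) <= Phi w.
  by apply: wmax => j; rewrite /upd; case: eqP => // ->.
lra.
Qed.

End PotentialGame.

Lemma is_path_uniq {V E : finType} {src dst : E -> V} {es : seq E} :
  is_path src dst es -> uniq es.
Proof.
case: es => [|e es] //; rewrite /is_path => /andP[_].
by rewrite cons_uniq => /andP[_ /map_uniq].
Qed.

Lemma rcum_card_setD1 {R : realType} {I E : finType} (Rw : nat -> E -> R)
    (A : {set I}) (i : I) (e : E) :
  rcum Rw #|A| e = rcum Rw #|A :\ i| e + (if i \in A then Rw #|A| e else 0).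
Proof.
rewrite (cardsD1 i A); case: (i \in A); last by rewrite add0n addr0.
by rewrite add1n /rcum big_nat_recr.
Qed.

Section Realization.
Context {R : realType} {N : nat} {E : finType}.
Variables (P : 'I_N -> seq E) (Rw : nat -> E -> R) (Lam : 'I_N -> seq nat -> R).
Hypothesis P_uniq : forall j, uniq (P j).

Definition horizon (w : 'I_N -> seq nat) (tau : realization N E) : nat :=
  (\max_(j < N) \max_(t <- deps P w tau j) t).+1.

Lemma deps_lt_horizon w tau j t :
  t \in deps P w tau j -> (t < horizon w tau)%N.
Proof.
move=> tj; rewrite ltnS; apply: leq_trans (leq_bigmax j).
exact: (@leq_bigmax_seq _ _ _ id).
Qed.

Section Horizon.
Variables (w : 'I_N -> seq nat) (tau : realization N E) (T : nat).
Hypothesis deps_ltT : forall j t, t \in deps P w tau j -> (t < T)%N.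

Lemma Cset_eq0 e t : (T <= t)%N -> Cset P e t w tau = finset.set0.
Proof.
move=> Tt; apply/setP => j; rewrite !inE.
by apply/negP => /mem_zip_snd /deps_ltT /=; lia.
Qed.

Lemma Phireal_finite : Phireal P Rw Lam w tau =
  \sum_(0 <= t < T) \sum_(e : E) rcum Rw #|Cset P e t w tau| e
  - \sum_(i : 'I_N) Lam i (w i).
Proof.
rewrite /Phireal (lim_series_eventually0 _ T) // => t Tt.
by apply: big1 => e _; rewrite Cset_eq0 // cards0 /rcum big_geq.
Qed.

Lemma Phireal_split i : Phireal P Rw Lam w tau =
  \sum_(0 <= t < T) \sum_(e : E) rcum Rw #|Cset P e t w tau :\ i| e
  + Ureal P Rw Lam i w tau - \sum_(j | j != i) Lam j (w j).
Proof.
rewrite Phireal_finite (bigD1 i) //= /Ureal.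
rewrite -(sum_grid_mem_uniq T _ (fun e t => Rw #|Cset P e t w tau| e));
  last 2 first.
- exact: zip_uniql.
- by move=> x /mem_zip_snd; apply: deps_ltT.
have -> : \sum_(0 <= t < T) \sum_e rcum Rw #|Cset P e t w tau| e =
  \sum_(0 <= t < T) \sum_e rcum Rw #|Cset P e t w tau :\ i| e +
  \sum_(0 <= t < T) \sum_e (if (e, t) \in zip (P i) (deps P w tau i)
                           then Rw #|Cset P e t w tau| e else 0).
  rewrite -big_split; apply: eq_bigr => t _; rewrite -big_split.
  by apply: eq_bigr => e _; rewrite (rcum_card_setD1 Rw _ i) inE.
lra.
Qed.

End Horizon.

Lemma Cset_setD1_eq w1 w2 i e t tau : (forall j, j != i -> w1 j = w2 j) ->
  Cset P e t w1 tau :\ i = Cset P e t w2 tau :\ i.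
Proof.
move=> w12; apply/setP => j; rewrite !inE.
by case: eqVneq => //= ji; rewrite /deps w12.
Qed.

Lemma Phireal_sub_Ureal_eq w1 w2 i tau : (forall j, j != i -> w1 j = w2 j) ->
  Phireal P Rw Lam w1 tau - Ureal P Rw Lam i w1 tau =
  Phireal P Rw Lam w2 tau - Ureal P Rw Lam i w2 tau.
Proof.
move=> w12; set T := (horizon w1 tau + horizon w2 tau)%N.
have lt1 j t : t \in deps P w1 tau j -> (t < T)%N by move/deps_lt_horizon; lia.
have lt2 j t : t \in deps P w2 tau j -> (t < T)%N by move/deps_lt_horizon; lia.
rewrite (Phireal_split _ _ _ lt1 i) (Phireal_split _ _ _ lt2 i).
under eq_bigr => t _ do under eq_bigr => e _ do
  rewrite (Cset_setD1_eq w1 w2 i e t tau w12).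
have -> : \sum_(j | j != i) Lam j (w1 j) = \sum_(j | j != i) Lam j (w2 j).
  by apply: eq_bigr => j /w12 ->.
lra.
Qed.

Definition Rbound : R := \sum_(x : 'I_N.+1 * E) `|Rw x.1 x.2|.

Lemma Rbound_ge0 : 0 <= Rbound.
Proof. exact: sumr_ge0. Qed.

Lemma norm_Rw_le n e : (n <= N)%N -> `|Rw n e| <= Rbound.
Proof.
rewrite -ltnS => nN; rewrite /Rbound (bigD1 (Ordinal nN, e)) //= lerDl.
exact: sumr_ge0.
Qed.

Lemma card_le_N (A : {set 'I_N}) : (#|A| <= N)%N.
Proof. by rewrite -[X in (_ <= X)%N]card_ord max_card. Qed.

Lemma norm_rcum_le n e : (n <= N)%N -> `|rcum Rw n e| <= n%:R * Rbound.
Proof.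
move=> nN; apply: le_trans (ler_norm_sum _ _ _) _.
apply: le_trans (@ler_sum_nat _ _ _ _ (fun _ => Rbound) _) _.
  by move=> j /andP[_ jn]; apply: norm_Rw_le; lia.
by rewrite sumr_const_nat subn1 mulr_natl.
Qed.

Lemma norm_Ureal_le i w tau :
  `|Ureal P Rw Lam i w tau| <= (size (P i))%:R * Rbound + `|Lam i (w i)|.
Proof.
apply: le_trans (ler_normB _ _) _; rewrite lerD2r.
apply: le_trans (ler_norm_sum _ _ _) _.
apply: le_trans (@ler_sum _ _ _ _ _ (fun _ => Rbound) _) _.
  by move=> x _; apply: norm_Rw_le; apply: card_le_N.
rewrite sumr_const_seq size_zip mulr_natl.
exact: (ler_wpMn2l Rbound_ge0 (geq_minl _ _)).
Qed.

Lemma norm_Phireal_le w tau :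
  `|Phireal P Rw Lam w tau| <=
    (\sum_(j < N) size (P j))%:R * Rbound + `|\sum_(i < N) Lam i (w i)|.
Proof.
set T := horizon w tau.
rewrite (Phireal_finite _ _ T (@deps_lt_horizon w tau)).
apply: le_trans (ler_normB _ _) _; rewrite lerD2r.
have card_Cset e t : #|Cset P e t w tau|%:R * Rbound =
    \sum_(j < N) (if (e, t) \in zip (P j) (deps P w tau j) then Rbound else 0).
  rewrite mulr_natl -sumr_const big_mkcond; apply: eq_bigr => j _.
  by rewrite inE.
apply: (@le_trans _ _
    (\sum_(0 <= t < T) \sum_e #|Cset P e t w tau|%:R * Rbound)).
  apply: le_trans (ler_norm_sum _ _ _) _; apply: ler_sum => t _.
  apply: le_trans (ler_norm_sum _ _ _) _; apply: ler_sum => e _.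
  exact: norm_rcum_le (card_le_N _).
under eq_bigr => t _ do under eq_bigr => e _ do rewrite card_Cset.
under eq_bigr => t _ do rewrite exchange_big.
rewrite exchange_big natr_sum mulr_suml; apply: ler_sum => j _.
rewrite sum_grid_mem_uniq ?zip_uniql //; last first.
  by move=> x /mem_zip_snd /deps_lt_horizon.
rewrite sumr_const_seq size_zip mulr_natl.
exact: (ler_wpMn2l Rbound_ge0 (geq_minl _ _)).
Qed.

End Realization.

Section Expectation.
Context {R : realType} {N : nat} {E : finType}.
Variables (P : 'I_N -> seq E) (Rw : nat -> E -> R) (Lam : 'I_N -> seq nat -> R).
Variables (p : nat -> R) (taus : nat -> realization N E).
Hypothesis P_uniq : forall j, uniq (P j).
Hypothesis p_ge0 : forall k, 0 <= p k.
Hypothesis cvg_p : cvgn (series p).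

Lemma Phiexp_sub_Uexp_eq w1 w2 i : (forall j, j != i -> w1 j = w2 j) ->
  Phiexp P Rw Lam p taus w1 - Uexp P Rw Lam p taus i w1 =
  Phiexp P Rw Lam p taus w2 - Uexp P Rw Lam p taus i w2.
Proof.
move=> w12.
have cvgU w : cvgn (series (fun k => p k * Ureal P Rw Lam i w (taus k))).
  exact: is_cvg_series_weighted p_ge0 cvg_p
    (fun k => norm_Ureal_le P Rw Lam i w (taus k)).
have cvgPhi w : cvgn (series (fun k => p k * Phireal P Rw Lam w (taus k))).
  exact: is_cvg_series_weighted p_ge0 cvg_p
    (fun k => norm_Phireal_le P Rw Lam P_uniq w (taus k)).
rewrite /Phiexp /Uexp -!lim_seriesB //; congr (limn (series _)).
apply: funext => k; rewrite !fctE -!mulrBr.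
by rewrite (Phireal_sub_Ureal_eq P Rw Lam P_uniq w1 w2 i (taus k) w12).
Qed.

Lemma Phiexp_exact_potential i w a b :
  Phiexp P Rw Lam p taus (upd w i a) - Phiexp P Rw Lam p taus (upd w i b)
  = Uexp P Rw Lam p taus i (upd w i a) - Uexp P Rw Lam p taus i (upd w i b).
Proof.
have agree j : j != i -> upd w i a j = upd w i b j.
  by rewrite /upd => /negbTE ->.
by have := Phiexp_sub_Uexp_eq _ _ _ agree; lra.
Qed.

End Expectation.

Local Open Scope classical_set_scope.

Theorem theorem2 (R : realType) (V E : finType) (src dst : E -> V)
  (N : nat) (P : 'I_N -> seq E) (W : 'I_N -> seq (seq nat))
  (Rw : nat -> E -> R) (Lam : 'I_N -> seq nat -> R)
  (p : nat -> R) (taus : nat -> realization N E) :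
  (forall i, is_path src dst (P i)) ->
  (forall i, W i != [::]) ->
  (forall i a, a \in W i -> size a = size (P i)) ->
  (forall k, 0 <= p k) ->
  series p @ \oo --> (1 : R) ->
  (forall (i : 'I_N) (w : 'I_N -> seq nat) (a b : seq nat),
     (forall j, j != i -> w j \in W j) -> a \in W i -> b \in W i ->
     Phiexp P Rw Lam p taus (upd w i a) - Phiexp P Rw Lam p taus (upd w i b)
     = Uexp P Rw Lam p taus i (upd w i a) - Uexp P Rw Lam p taus i (upd w i b))
  /\
  (exists w : 'I_N -> seq nat, (forall j, w j \in W j) /\
     forall (i : 'I_N) (a : seq nat), a \in W i ->
       Uexp P Rw Lam p taus i (upd w i a) <= Uexp P Rw Lam p taus i w).
Proof.
move=> P_path W_neq0 _ p_ge0 /cvgP cvg_p.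
have P_uniq j : uniq (P j) := is_path_uniq (P_path j).
have potential := Phiexp_exact_potential P Rw Lam p taus P_uniq p_ge0 cvg_p.
split; first by move=> i w a b _ _ _; apply: potential.
have [w wW wmax] := exists_max_profile W_neq0 (Phiexp P Rw Lam p taus).
exists w; split => //.
by apply: potential_max_is_Nash wW wmax => i v a b _ _ _; apply: potential.
Qed.
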